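(* Let $L$ be a multisorted algebra in the positive quantifier-free signature with equality satisfying axioms (1), (2), (3), (11), (12), (13). Let $F$ be a prime filter on sort $n$ of $L$. Let $F_1,\dots,F_n$ be symbols such that $F_i=F_j$ if and only if $\Delta^n_{i,j}\in F$, and let $W=\{F_1,\dots,F_n\}$. Define $\varphi\colon L\to A(W)$ on each sort $k$ by: for each substitution $\alpha\colon k\to n$, $\alpha^{\mathrm{tuple}}(F_1,\dots,F_n)\in\varphi(r)$ if and only if $\alpha(r)\in F$. Then $\varphi$ is (well defined and) a morphism of positive quantifier-free algebras with equality.
   Context: Signature. There is a sort $n$ for each $n\ge0$. For every function $\alpha\colon\{1,\dots,n\}\to\{1,\dots,k\}$ there is a unary function symbol (''substitution'') $\alpha\colon n\to k$ (argument of sort $n$, value of sort $k$). Each sort has constants $0,1$ and binary $\vee,\wedge$; for each $n$ and $1\le i,j\le n$ there is a constant $\Delta^n_{i,j}$ of sort $n$. This is the positive quantifier-free signature with equality. For $\alpha\colon k\to n$, $\beta\colon n\to m$, $\beta\circ\alpha$ is the substitution symbol of the composite function. For a set $W$: $\alpha^{\mathrm{tuple}}(x_1,\dots,x_k)=(x_{\alpha(1)},\dots,x_{\alpha(n)})$, $\alpha^{\mathrm{relation}}(r)=\{\bar x\in W^k:\alpha^{\mathrm{tuple}}(\bar x)\in r\}$. The positive quantifier-free algebra with equality $A(W)$ interprets sort $n$ as $\mathcal P(W^n)$, $\alpha$ as $\alpha^{\mathrm{relation}}$, $0,1,\vee,\wedge$ as $\emptyset,W^n,\cup,\cap$, and $\Delta^n_{i,j}=\{(x_1,\dots,x_n)\in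 W^n: x_i=x_j\}$. $x\le y$ means $x=x\wedge y$. Axioms: (1) each sort is a bounded distributive lattice; (2) substitutions preserve $0,1,\vee,\wedge$; (3) $(\beta\circ\alpha)(r)=\beta(\alpha(r))$; (11) $\Delta^n_{i,i}=1$, $\Delta^n_{i,j}=\Delta^n_{j,i}$, $\Delta^n_{i,j}\wedge\Delta^n_{j,k}\le\Delta^n_{i,k}$; (12) for substitutions $\alpha,\beta\colon k\to n$ and all $r$ of sort $k$: $\alpha(r)\wedge\bigwedge_{l=1}^k\Delta^n_{\alpha(l),\beta(l)}=\beta(r)\wedge\bigwedge_{l=1}^k\Delta^n_{\alpha(l),\beta(l)}$; (13) for each substitution $\alpha\colon k\to n$: $\alpha(\Delta^k_{i,j})=\Delta^n_{\alpha(i),\alpha(j)}$. A prime filter is a proper, nonempty, upward-closed, $\wedge$-closed subset of a sort with $x\vee y\in F\Rightarrow x\in F$ or $y\in F$. *)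

From mathcomp Require Import all_boot.
Set Implicit Arguments. Unset Strict Implicit. Unset Printing Implicit Defensive.

(* Convention: the index set {1,...,n} of the paper is rendered as 'I_n = {0,...,n-1}. *)

Unset Implicit Arguments.
Record pqfe_alg := PQFEAlg {
  car : nat -> Type;
  zero : forall n, car n;
  one : forall n, car n;
  join : forall n, car n -> car n -> car n;
  meet : forall n, car n -> car n -> car n;
  Dl : forall n, 'I_n -> 'I_n -> car n;
  subst : forall k n, ('I_k -> 'I_n) -> car k -> car n
}.
Set Implicit Arguments.

Section PQFE.
Variable L : pqfe_alg.

Definition leL n (x y : car L n) : Prop := x = meet L _ x y.

Definition ax1 : Prop := forall n,
  (forall x y z : car L n, join L _ x (join L _ y z) = join L _ (join L _ x y) z) /\
  (forall x y z : car L n, meet L _ x (meet L _ y z) = meet L _ (meet L _ x y) z) /\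
  (forall x y : car L n, join L _ x y = join L _ y x) /\
  (forall x y : car L n, meet L _ x y = meet L _ y x) /\
  (forall x y : car L n, join L _ x (meet L _ x y) = x) /\
  (forall x y : car L n, meet L _ x (join L _ x y) = x) /\
  (forall x y z : car L n, meet L _ x (join L _ y z) = join L _ (meet L _ x y) (meet L _ x z)) /\
  (forall x : car L n, join L _ x (zero L n) = x) /\
  (forall x : car L n, meet L _ x (one L n) = x).

Definition ax2 : Prop := forall k n (a : 'I_k -> 'I_n),
  subst L _ _ a (zero L k) = zero L n /\ subst L _ _ a (one L k) = one L n /\
  (forall x y, subst L _ _ a (join L _ x y) = join L _ (subst L _ _ a x) (subst L _ _ a y)) /\
  (forall x y, subst L _ _ a (meet L _ x y) = meet L _ (subst L _ _ a x) (subst L _ _ a y)).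

Definition ax3 : Prop := forall k n m (a : 'I_k -> 'I_n) (b : 'I_n -> 'I_m) (r : car L k),
  subst L _ _ (fun i => b (a i)) r = subst L _ _ b (subst L _ _ a r).

Definition ax11 : Prop := forall n,
  (forall i : 'I_n, Dl L n i i = one L n) /\
  (forall i j : 'I_n, Dl L n i j = Dl L n j i) /\
  (forall i j k : 'I_n, leL (meet L _ (Dl L n i j) (Dl L n j k)) (Dl L n i k)).

Fixpoint bigmeet_seq n (s : seq (car L n)) : car L n :=
  match s with [::] => one L n | x :: s' => meet L _ x (bigmeet_seq s') end.

Definition ax12 : Prop := forall k n (a b : 'I_k -> 'I_n) (r : car L k),
  let D := bigmeet_seq [seq Dl L n (a l) (b l) | l <- enum 'I_k] in
  meet L _ (subst L _ _ a r) D = meet L _ (subst L _ _ b r) D.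

Definition ax13 : Prop := forall k n (a : 'I_k -> 'I_n) (i j : 'I_k),
  subst L _ _ a (Dl L k i j) = Dl L n (a i) (a j).

Definition pqfe_axioms : Prop := ax1 /\ ax2 /\ ax3 /\ ax11 /\ ax12 /\ ax13.

Definition prime_filter n (F : car L n -> Prop) : Prop :=
  (exists x, ~ F x) /\ (exists x, F x) /\
  (forall x y, F x -> leL x y -> F y) /\
  (forall x y, F x -> F y -> F (meet L _ x y)) /\
  (forall x y, F (join L _ x y) -> F x \/ F y).

(* morphism of positive quantifier-free algebras with equality from L to A(W);
   sort k of A(W) is the powerset of W^k = ('I_k -> W) *)
Definition is_morphism_to_AW (W : Type) (phi : forall k, car L k -> (('I_k -> W) -> Prop)) : Prop :=
  (forall k, phi k (zero L k) = (fun _ => False)) /\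
  (forall k, phi k (one L k) = (fun _ => True)) /\
  (forall k x y, phi k (join L _ x y) = (fun t => phi k x t \/ phi k y t)) /\
  (forall k x y, phi k (meet L _ x y) = (fun t => phi k x t /\ phi k y t)) /\
  (forall k (i j : 'I_k), phi k (Dl L k i j) = (fun t => t i = t j)) /\
  (forall k n (a : 'I_k -> 'I_n) (r : car L k),
     phi n (subst L _ _ a r) = (fun t : 'I_n -> W => phi k r (fun i => t (a i)))).

End PQFE.

(* A tuple t over W = {F_1, ..., F_n} is always of the form (F_(a 1), ..., F_(a k))
   for some a : k -> n, and we let t belong to phi(r) when a(r) is in F. Axiom (12)
   makes this independent of the choice of a: if F_(a l) = F_(b l) for all l then
   every Delta_(a l, b l) lies in F, hence so does their meet D, and a(r) /\ D =
   b(r) /\ D. Preservation of 0, 1, meets and joins then reduces, through axiom (2),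
   to F being a prime filter; preservation of Delta is axiom (13) together with the
   defining property of the F_i, and of substitutions is axiom (3). *)
From Stdlib Require Import FunctionalExtensionality PropExtensionality.
From Pilot Require Import Defs.
From mathcomp Require Import all_boot.

Set Implicit Arguments.
Unset Strict Implicit.

Section BoundedLattice.
Variable L : pqfe_alg.
Hypothesis HL1 : ax1 L.

Lemma meet_idem n (x : car L n) : meet L _ x x = x.
Proof.
have [_ [_ [_ [_ [absJM [absMJ _]]]]]] := HL1 n.
by rewrite -{2}(absJM x x) absMJ.
Qed.

Lemma meet_le_r n (x y : car L n) : leL (meet L _ x y) y.
Proof. have [_ [meetA _]] := HL1 n; by rewrite /leL -meetA meet_idem. Qed.

Lemma meet_le_l n (x y : car L n) : leL (meet L _ x y) x.
Proof. have [_ [_ [_ [meetC _]]]] := HL1 n; rewrite meetC; exact: meet_le_r. Qed.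

Lemma join_ge_l n (x y : car L n) : leL x (join L _ x y).
Proof. have [_ [_ [_ [_ [_ [absMJ _]]]]]] := HL1 n; by rewrite /leL absMJ. Qed.

Lemma join_ge_r n (x y : car L n) : leL y (join L _ x y).
Proof. have [_ [_ [joinC _]]] := HL1 n; rewrite joinC; exact: join_ge_l. Qed.

Lemma zero_le n (x : car L n) : leL (zero L n) x.
Proof.
have [_ [_ [joinC [_ [_ [absMJ [_ [join0 _]]]]]]]] := HL1 n.
by rewrite /leL -{1}(join0 x) joinC absMJ.
Qed.

Lemma le_one n (x : car L n) : leL x (Defs.one L n).
Proof. have [_ [_ [_ [_ [_ [_ [_ [_ meet1]]]]]]]] := HL1 n; by rewrite /leL meet1. Qed.

Section PrimeFilter.
Variables (n : nat) (F : car L n -> Prop).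
Hypothesis HF : prime_filter F.

Lemma prime_filter_one : F (Defs.one L n).
Proof. have [_ [[x Fx] [Fup _]]] := HF; exact: Fup _ _ Fx (le_one x). Qed.

Lemma prime_filter_zero : ~ F (zero L n).
Proof. move=> F0; have [[x nFx] [_ [Fup _]]] := HF; exact: nFx (Fup _ _ F0 (zero_le x)). Qed.

Lemma prime_filter_meet x y : F (meet L _ x y) <-> F x /\ F y.
Proof.
have [_ [_ [Fup [Fmeet _]]]] := HF; split.
- by move=> Fxy; split; [exact: Fup _ _ Fxy (meet_le_l _ _) | exact: Fup _ _ Fxy (meet_le_r _ _)].
- by case; exact: Fmeet.
Qed.

Lemma prime_filter_join x y : F (join L _ x y) <-> F x \/ F y.
Proof.
have [_ [_ [Fup [_ Fprime]]]] := HF; split; first exact: Fprime.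
by case=> [Fx | Fy]; [exact: Fup _ _ Fx (join_ge_l _ _) | exact: Fup _ _ Fy (join_ge_r _ _)].
Qed.

Lemma prime_filter_bigmeet (I : Type) (f : I -> car L n) (s : seq I) :
  (forall i, F (f i)) -> F (bigmeet_seq (map f s)).
Proof.
move=> Ff; elim: s => [|i s IHs] /=; first exact: prime_filter_one.
by apply/prime_filter_meet.
Qed.

End PrimeFilter.
End BoundedLattice.

Section FilterRepresentation.
Variables (L : pqfe_alg) (n : nat) (F : car L n -> Prop) (W : Type) (Fs : 'I_n -> W).
Hypotheses (HL1 : ax1 L) (HL12 : ax12 L) (HF : prime_filter F).
Hypothesis Fs_eq_diag : forall i j : 'I_n, Fs i = Fs j -> F (Dl L n i j).
Hypothesis Fs_surj : forall w : W, exists i : 'I_n, Fs i = w.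

Lemma filter_subst_congr k (a b : 'I_k -> 'I_n) (r : car L k) :
  (forall l, Fs (a l) = Fs (b l)) -> F (subst L _ _ a r) -> F (subst L _ _ b r).
Proof.
move=> eq_ab Far.
pose D := bigmeet_seq [seq Dl L n (a l) (b l) | l <- enum 'I_k].
have FD : F D by apply: prime_filter_bigmeet => // l; apply: Fs_eq_diag.
suff /(prime_filter_meet HL1 HF) [] : F (meet L _ (subst L _ _ b r) D) by [].
by rewrite -(HL12 a b r); apply/(prime_filter_meet HL1 HF).
Qed.

Definition filter_rel k (r : car L k) (t : 'I_k -> W) : Prop :=
  exists a : 'I_k -> 'I_n, (forall l, t l = Fs (a l)) /\ F (subst L _ _ a r).

Lemma filter_relE k (a : 'I_k -> 'I_n) (r : car L k) :
  filter_rel r (fun l => Fs (a l)) <-> F (subst L _ _ a r).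
Proof.
split; last by exists a.
case=> b [eq_ab Fbr]; apply: filter_subst_congr Fbr => l; by rewrite eq_ab.
Qed.

Lemma tuple_pred_ext k (P Q : ('I_k -> W) -> Prop) :
  (forall a : 'I_k -> 'I_n, P (fun l => Fs (a l)) <-> Q (fun l => Fs (a l))) -> P = Q.
Proof.
move=> PQ; apply: functional_extensionality => t.
have [a eq_ta] : exists a : 'I_k -> 'I_n, forall l, Fs (a l) = t l.
  exact: (@fin_all_exists _ (fun=> 'I_n) (fun l i => Fs i = t l) (fun l => Fs_surj (t l))).
have -> : t = (fun l => Fs (a l)) by apply: functional_extensionality => l; rewrite eq_ta.
exact/propositional_extensionality/PQ.
Qed.

Hypotheses (HL2 : ax2 L) (HL3 : ax3 L) (HL13 : ax13 L).
Hypothesis diag_Fs_eq : forall i j : 'I_n, F (Dl L n i j) -> Fs i = Fs j.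

Lemma filter_rel_morphism : is_morphism_to_AW filter_rel.
Proof.
split; [|split; [|split; [|split; [|split]]]].
- move=> k; apply: tuple_pred_ext => a; rewrite filter_relE.
  have [-> _] := HL2 a; split=> //; exact: prime_filter_zero.
- move=> k; apply: tuple_pred_ext => a; rewrite filter_relE.
  have [_ [-> _]] := HL2 a; split=> // _; exact: prime_filter_one.
- move=> k x y; apply: tuple_pred_ext => a; rewrite !filter_relE.
  have [_ [_ [-> _]]] := HL2 a; exact: prime_filter_join.
- move=> k x y; apply: tuple_pred_ext => a; rewrite !filter_relE.
  have [_ [_ [_ ->]]] := HL2 a; exact: prime_filter_meet.
- move=> k i j; apply: tuple_pred_ext => a; rewrite filter_relE HL13.
  by split; [exact: diag_Fs_eq | exact: Fs_eq_diag].
- move=> k m b r; apply: tuple_pred_ext => a.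
  by rewrite (filter_relE a) (filter_relE (fun l => a (b l))) -HL3.
Qed.

End FilterRepresentation.

Theorem lemma4p16 (L : pqfe_alg) (HL : pqfe_axioms L) (n : nat)
  (F : car L n -> Prop) (HF : prime_filter F)
  (W : Type) (Fs : 'I_n -> W)
  (HFs : forall i j : 'I_n, Fs i = Fs j <-> F (Dl L n i j))
  (HW : forall w : W, exists i : 'I_n, Fs i = w) :
  exists phi : forall k, car L k -> (('I_k -> W) -> Prop),
    (forall k (a : 'I_k -> 'I_n) (r : car L k),
        phi k r (fun i => Fs (a i)) <-> F (subst L k n a r)) /\
    is_morphism_to_AW phi.
Proof.
have [HL1 [HL2 [HL3 [_ [HL12 HL13]]]]] := HL.
have Fs_eq_diag i j : Fs i = Fs j -> F (Dl L n i j) by case: (HFs i j).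
have diag_Fs_eq i j : F (Dl L n i j) -> Fs i = Fs j by case: (HFs i j).
exists (filter_rel F Fs); split.
- move=> k a r; exact: filter_relE.
- exact: filter_rel_morphism.
Qed.
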